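(* Let $c>0$ (and $s>0$, $F>1$) be constants. There exists a constant $\alpha_1>0$ depending only on $c$ such that at every time $t$, $$\mathbb E[Z^{t+1}-Z^t\mid x^t,\lambda^t]\ge -\Pr[B\mid x^t,\lambda^t]\cdot\alpha_1(1+\log\lambda^t).$$
   Context: Consider the SA-$(1,\lambda)$-EA on a dynamic monotone function: a function $f:\{0,1\}^n\to\mathbb R$ is monotone if $f(x)>f(y)$ whenever $x\ne y$ and $x_i\ge y_i$ for all $i$; $(f^t)_{t\ge0}$ is a sequence of monotone functions, $f^t$ possibly chosen adversarially depending on $x^t$. The algorithm (with constants $c>0$, $s>0$, $F>1$) maintains $x^t\in\{0,1\}^n$, real $\lambda^t\ge1$; in generation $t$ it creates $\lfloor\lambda^t\rceil$ (nearest integer) offspring, each independently by flipping every bit of $x^t$ independently with probability $c/n$; $x^{t+1}$ is an offspring maximizing $f^t$ (ties uniformly at random); $\lambda^{t+1}=\max\{1,\lambda^t/F\}$ if $f^t(x^{t+1})>f^t(x^t)$, else $\lambda^{t+1}=F^{1/s}\lambda^t$. $Z^t$ is the number of zero-bits of $x^t$. $B$ is the event that some offspring of $x^t$ flips at least one zero-bit of $x^t$. $\log$ is the natural logarithm. *)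

From HB Require Import structures.
From mathcomp Require Import all_boot all_order all_algebra.
From mathcomp Require Import reals exp.
Set Implicit Arguments. Unset Strict Implicit. Unset Printing Implicit Defensive.
Import Order.TTheory GRing.Theory Num.Theory.
Local Open Scope ring_scope.

Section SAEA.
Variable R : realType.

Definition bits (n : nat) := {ffun 'I_n -> bool}.

Definition zeros n (x : bits n) : nat := #|[set j | ~~ x j]|.

Definition monotone_fun n (f : bits n -> R) : Prop :=
  forall x y : bits n, x != y -> (forall i, y i ==> x i) -> f y < f x.

(* nearest integer (ties rounded up), as a nat *)
Definition round_nat (l : R) : nat := Num.truncn (l + 1 / 2).

(* probability that standard bit mutation with rate c/n turns x into y *)
Definition mut_prob (c : R) n (x y : bits n) : R :=
  \prod_(j < n) (if x j == y j then 1 - c / n%:R else c / n%:R).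

Definition off_prob (c : R) n k (x : bits n) (ys : {ffun 'I_k -> bits n}) : R :=
  \prod_(i < k) mut_prob c x (ys i).

Definition best n k (f : bits n -> R) (ys : {ffun 'I_k -> bits n}) : {set 'I_k} :=
  [set i | [forall j, f (ys j) <= f (ys i)]].

(* E[Z^{t+1} - Z^t | x^t = x, lambda^t], with k = round(lambda) offspring,
   selection of a best offspring with ties broken uniformly at random *)
Definition drift (c : R) n k (f : bits n -> R) (x : bits n) : R :=
  \sum_(ys : {ffun 'I_k -> bits n})
     off_prob c x ys *
     (\sum_(i in best f ys) ((zeros (ys i))%:R - (zeros x)%:R) / #|best f ys|%:R).

(* event B: some offspring flips at least one zero-bit of x *)
Definition flipsZero n k (x : bits n) (ys : {ffun 'I_k -> bits n}) : bool :=
  [exists i, exists j, ~~ x j && ys i j].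

Definition probB (c : R) n k (x : bits n) : R :=
  \sum_(ys : {ffun 'I_k -> bits n})
     off_prob c x ys * (if flipsZero x ys then 1 else 0).

End SAEA.

(* Let W_i be the number of zero-bits of x flipped in offspring i. Whichever
   offspring is selected, Z decreases by at most max_i W_i, so neither the
   monotonicity of f nor the selection rule matters. For K >= 1 and w in N,
   w <= ln K [w > 0] + (e^(2w) - 1) / K. Take K = 1 + k c with k offspring: the
   first term has expectation ln K Pr[B], and since W_i counts independent
   flips the second has expectation
   k ((1 + (c/n)(e^2 - 1))^Z - 1) / K <= (e^2 - 1) e^(c (e^2 - 1)) k p / (1 + k p)
   with p = Z c / n <= c, while Pr[B] = 1 - (1 - c/n)^(Z k) >= k p / (1 + k p). *)
From HB Require Import structures.
From mathcomp Require Import all_boot all_order all_algebra.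
From mathcomp Require Import reals sequences exp.
From mathcomp Require Import ring lra.
Import Order.TTheory GRing.Theory Num.Theory.
Set Implicit Arguments. Unset Strict Implicit. Unset Printing Implicit Defensive.
Local Open Scope ring_scope.

Section Drift.
Variable R : realType.

Definition flips n (x y : bits n) : nat := #|[set j | ~~ x j && y j]|.

Lemma zeros_le_flips n (x y : bits n) : (zeros x <= zeros y + flips x y)%N.
Proof.
apply: leq_trans (leq_card_setU _ _); apply: subset_leq_card.
by apply/subsetP => j; rewrite !inE; case: (x j); case: (y j).
Qed.

Lemma exprn_flips (A : R) n (x y : bits n) :
  A ^+ flips x y = \prod_j (if ~~ x j && y j then A else 1).
Proof. by rewrite /flips cardsE -big_mkcond prodr_const. Qed.

Lemma exprn_zeros (A : R) n (x : bits n) :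
  A ^+ zeros x = \prod_j (if ~~ x j then A else 1).
Proof. by rewrite /zeros cardsE -big_mkcond prodr_const. Qed.

Lemma mean_ge (I : finType) (S : {set I}) (u : I -> R) (b : R) :
  0 <= b -> (forall i, i \in S -> - b <= u i) ->
  - b <= \sum_(i in S) u i / #|S|%:R.
Proof.
move=> b0 ub; have [S0 | SN0] := eqVneq #|S| 0%N.
  by rewrite big1 ?oppr_le0 // => i _; rewrite S0 invr0 mulr0.
apply: le_trans (ler_sum _ (fun i iS => ler_wpM2r _ (ub i iS))); last first.
  by rewrite invr_ge0.
by rewrite sumr_const -[_ *+ _]mulr_natr divfK ?pnatr_eq0.
Qed.

(* If [w > ln K] then [K < e^w], and [w e^w <= e^(2w) - 1]. *)
Lemma natr_le_ln_expR (K : R) (w : nat) : 1 <= K ->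
  w%:R <= ln K * (0 < w)%N%:R + K^-1 * (expR 2 ^+ w - 1).
Proof.
move=> K1; have K0 : 0 < K by apply: lt_le_trans K1.
have ew1 : 1 + w%:R <= expR (w%:R) :> R by exact: expR_ge1Dx.
have e2w : expR 2 ^+ w = expR (w%:R) ^+ 2 :> R.
  by rewrite -!expRM_natl mulrC.
have cost0 : 0 <= K^-1 * (expR 2 ^+ w - 1).
  apply: mulr_ge0; first by rewrite invr_ge0 ltW.
  by rewrite e2w subr_ge0 exprn_ege1 //; have := ler0n R w; lra.
case: w ew1 e2w cost0 => [|w] ew1 e2w cost0; first by rewrite mulr0 add0r.
rewrite mulr1; have [wK | Kw] := lerP w.+1%:R (ln K); first lra.
have KE : K < expR (w.+1%:R) by rewrite -[K]lnK ?posrE // ltr_expR.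
suff : w.+1%:R <= K^-1 * (expR 2 ^+ w.+1 - 1) by have := ln_ge0 K1; nra.
rewrite ler_pdivlMl // e2w expr2.
have : K * w.+1%:R <= expR (w.+1%:R) * w.+1%:R by rewrite ler_wpM2r ?ltW.
nra.
Qed.

Lemma expR_sub1_le (u : R) : expR u - 1 <= u * expR u.
Proof.
by have := expR_ge1Dx (- u); rewrite expRN -div1r ler_pdivlMr ?expR_gt0 //; lra.
Qed.

Lemma exprn_le_expR (a : R) (m : nat) : -1 <= a -> (1 + a) ^+ m <= expR (m%:R * a).
Proof.
by move=> a1; rewrite expRM_natl lerXn2r ?nnegrE ?expR_ge0 ?expR_ge1Dx //; lra.
Qed.

Lemma exprn_sub1_le (a : R) (m : nat) : 0 <= a ->
  (1 + a) ^+ m - 1 <= m%:R * a * expR (m%:R * a).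
Proof.
by move=> a0; have := expR_sub1_le (m%:R * a); have := exprn_le_expR m (a := a); lra.
Qed.

Lemma one_sub_exprn_ge (q : R) (m : nat) : 0 <= q <= 1 ->
  m%:R * q / (1 + m%:R * q) <= 1 - (1 - q) ^+ m.
Proof.
case/andP => q0 q1; have mq0 : 0 <= m%:R * q by rewrite mulr_ge0.
have : (1 - q) ^+ m <= (1 + m%:R * q)^-1.
  apply: le_trans (exprn_le_expR m (_ : -1 <= - q)) _; first lra.
  rewrite mulrN expRN lef_pV2 ?posrE ?expR_gt0 ?expR_ge1Dx //; lra.
suff -> : m%:R * q / (1 + m%:R * q) = 1 - (1 + m%:R * q)^-1 by lra.
by field; lra.
Qed.

Lemma ln_round_le (c lam : R) (k : nat) : 0 <= c -> 1 <= lam ->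
  k%:R <= lam + 1 / 2 -> ln (1 + k%:R * c) <= ln (1 + 2 * c) + ln lam.
Proof.
move=> c0 lam1 klam; have k0 : 0 <= k%:R :> R by [].
have : k%:R * c <= (lam + 1 / 2) * c by rewrite ler_wpM2r.
by rewrite -lnM ?ler_ln ?posrE; nra.
Qed.

Lemma moment_le_one_sub_exprn (c q a : R) (Z k : nat) :
  0 <= q <= 1 -> 0 <= a -> Z%:R * q <= c ->
  (1 + k%:R * c)^-1 * (k%:R * ((1 + q * a) ^+ Z - 1)) <=
  a * expR (c * a) * (1 - (1 - q) ^+ (Z * k)).
Proof.
move=> q01 a0 Zq; have /andP[q0 _] := q01.
set p := Z%:R * q; set E := expR (c * a).
have p0 : 0 <= p by rewrite mulr_ge0.
have k0 : 0 <= k%:R :> R by [].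
have aE0 : 0 <= a * E by rewrite mulr_ge0 ?expR_ge0.
have moment : (1 + q * a) ^+ Z - 1 <= p * (a * E).
  apply: le_trans (exprn_sub1_le Z (mulr_ge0 q0 a0)) _.
  rewrite mulrA -/p mulrA ler_wpM2l ?mulr_ge0 //.
  by rewrite ler_expR ler_wpM2r.
have kp_le : k%:R * p / (1 + k%:R * p) <= 1 - (1 - q) ^+ (Z * k).
  by rewrite /p mulrA -natrM mulnC; apply: one_sub_exprn_ge.
have kpc : k%:R * p <= k%:R * c by rewrite ler_wpM2l.
have kp0 : 0 <= k%:R * p by rewrite mulr_ge0.
have inv_le : (1 + k%:R * c)^-1 <= (1 + k%:R * p)^-1.
  by rewrite lef_pV2 ?posrE ?lerD2l //; lra.
have inv0 : 0 <= (1 + k%:R * c)^-1 by rewrite invr_ge0; lra.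
have X0 := mulr_ge0 k0 (mulr_ge0 p0 aE0).
have := ler_wpM2l inv0 (ler_wpM2l k0 moment).
have := ler_wpM2r X0 inv_le.
have -> : (1 + k%:R * p)^-1 * (k%:R * (p * (a * E))) =
          k%:R * p / (1 + k%:R * p) * (a * E) by ring.
have : k%:R * p / (1 + k%:R * p) * (a * E) <= a * E * (1 - (1 - q) ^+ (Z * k)).
  by rewrite mulrC ler_wpM2l.
lra.
Qed.

Lemma exprn_expR2_ge1 (m : nat) : 1 <= expR 2 ^+ m :> R.
Proof. by rewrite exprn_ege1 //; have := expR_ge1Dx (2 : R); lra. Qed.

Lemma flipsZeroE n k (x : bits n) (ys : {ffun 'I_k -> bits n}) :
  flipsZero x ys = [exists i, 0 < flips x (ys i)]%N.
Proof.
apply: eq_existsb => i; rewrite card_gt0.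
by apply/existsP/set0Pn => -[j xyj]; exists j; rewrite inE in xyj *.
Qed.

Definition flip_cost (K : R) n k (x : bits n) (ys : {ffun 'I_k -> bits n}) : R :=
  ln K * (if flipsZero x ys then 1 else 0) +
  K^-1 * \sum_i (expR 2 ^+ flips x (ys i) - 1).

Lemma flip_cost_ge0 (K : R) n k (x : bits n) (ys : {ffun 'I_k -> bits n}) :
  1 <= K -> 0 <= flip_cost K x ys.
Proof.
move=> K1; apply: addr_ge0; apply: mulr_ge0.
- exact: ln_ge0.
- by case: ifP.
- by rewrite invr_ge0; apply: le_trans K1.
- by apply: sumr_ge0 => i _; rewrite subr_ge0 exprn_expR2_ge1.
Qed.

Lemma gain_ge_flip_cost (K : R) n k (f : bits n -> R) (x : bits n)
    (ys : {ffun 'I_k -> bits n}) : 1 <= K ->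
  - flip_cost K x ys <=
  \sum_(i in best f ys) ((zeros (ys i))%:R - (zeros x)%:R) / #|best f ys|%:R.
Proof.
move=> K1; apply: mean_ge => [|i _]; first exact: flip_cost_ge0.
have lossW : (zeros x)%:R <= (zeros (ys i))%:R + (flips x (ys i))%:R :> R.
  by rewrite -natrD ler_nat zeros_le_flips.
have costW := natr_le_ln_expR (flips x (ys i)) K1.
suff : ln K * (0 < flips x (ys i))%N%:R +
         K^-1 * (expR 2 ^+ flips x (ys i) - 1) <= flip_cost K x ys by lra.
apply: lerD; apply: ler_wpM2l.
- exact: ln_ge0.
- rewrite flipsZeroE; case: existsP => [_ | noflip]; first by case: (0 < _)%N.
  suff /negbTE -> : ~~ (0 < flips x (ys i))%N by [].
  by apply/negP => flip_i; apply: noflip; exists i.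
- by rewrite invr_ge0; apply: le_trans K1.
- rewrite (bigD1 i) //= lerDl; apply: sumr_ge0 => i' _.
  by rewrite subr_ge0 exprn_expR2_ge1.
Qed.

Section Mutation.
Variables (c : R) (n : nat).
Local Notation q := (c / n%:R).

Lemma sum_mut_prob_prod (x : bits n) (g : 'I_n -> bool -> R) :
  \sum_y mut_prob c x y * \prod_j g j (y j) =
  \prod_j ((1 - q) * g j (x j) + q * g j (~~ x j)).
Proof.
set h := fun j b => (if x j == b then 1 - q else q) * g j b.
transitivity (\sum_(y : bits n) \prod_j h j (y j)).
  by apply: eq_bigr => y _; rewrite /mut_prob big_split.
rewrite -bigA_distr_bigA.
by apply: eq_bigr => j _; rewrite big_bool /h; case: (x j) => //=; rewrite addrC.
Qed.

Lemma sum_mut_prob_exprn_flips (A : R) (x : bits n) :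
  \sum_y mut_prob c x y * A ^+ flips x y = (1 + q * (A - 1)) ^+ zeros x.
Proof.
under eq_bigr do rewrite exprn_flips.
rewrite (sum_mut_prob_prod x (fun j b => if ~~ x j && b then A else 1)).
by rewrite exprn_zeros; apply: eq_bigr => j _; case: (x j) => /=; ring.
Qed.

Lemma sum_mut_prob (x : bits n) : \sum_y mut_prob c x y = 1.
Proof.
have := sum_mut_prob_exprn_flips 1 x; rewrite subrr mulr0 addr0 !expr1n => <-.
by apply: eq_bigr => y _; rewrite expr1n mulr1.
Qed.

Lemma sum_off_prob_prod k (x : bits n) (h : 'I_k -> bits n -> R) :
  \sum_(ys : {ffun 'I_k -> bits n}) off_prob c x ys * \prod_i h i (ys i) =
  \prod_i \sum_y mut_prob c x y * h i y.
Proof.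
transitivity (\sum_(ys : {ffun 'I_k -> bits n})
                \prod_i (mut_prob c x (ys i) * h i (ys i))).
  by apply: eq_bigr => ys _; rewrite /off_prob big_split.
by rewrite bigA_distr_bigA.
Qed.

Lemma sum_off_prob k (x : bits n) :
  \sum_(ys : {ffun 'I_k -> bits n}) off_prob c x ys = 1.
Proof.
transitivity (\sum_(ys : {ffun 'I_k -> bits n})
                off_prob c x ys * \prod_i (fun _ _ => 1 : R) i (ys i)).
  by apply: eq_bigr => ys _; rewrite big1 ?mulr1.
rewrite (sum_off_prob_prod x (fun _ _ => 1)) big1 // => i _.
by under eq_bigr do rewrite mulr1; exact: sum_mut_prob.
Qed.

Lemma sum_off_prob_marginal k (x : bits n) (h : bits n -> R) (i0 : 'I_k) :
  \sum_(ys : {ffun 'I_k -> bits n}) off_prob c x ys * h (ys i0) =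
  \sum_y mut_prob c x y * h y.
Proof.
have := sum_off_prob_prod x (fun i y => if i == i0 then h y else 1).
rewrite [in X in _ = X -> _](bigD1 i0) //= eqxx.
rewrite [X in _ = _ * X -> _]big1 ?mulr1 => [<-|i /negbTE ->]; last first.
  by under eq_bigr do rewrite mulr1; exact: sum_mut_prob.
apply: eq_bigr => ys _.
by rewrite (bigD1 i0) //= eqxx big1 ?mulr1 // => i /negbTE ->.
Qed.

Lemma flipsZero_indicator k (x : bits n) (ys : {ffun 'I_k -> bits n}) :
  (if flipsZero x ys then 1 else 0 : R) = 1 - \prod_i 0 ^+ flips x (ys i).
Proof.
rewrite flipsZeroE; case: existsP => [[i flip_i] | noflip].
  by rewrite (bigD1 i) //= expr0n gtn_eqF // mul0r subr0.
rewrite big1 ?subrr // => i _; rewrite expr0n eqn0Ngt.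
suff -> : ~~ (0 < flips x (ys i))%N by [].
by apply/negP => flip_i; apply: noflip; exists i.
Qed.

Lemma probBE k (x : bits n) : probB c k x = 1 - (1 - q) ^+ (zeros x * k).
Proof.
rewrite /probB; under eq_bigr do rewrite flipsZero_indicator mulrBr mulr1.
rewrite sumrB sum_off_prob (sum_off_prob_prod x (fun _ y => 0 ^+ flips x y)).
under eq_bigr do rewrite sum_mut_prob_exprn_flips.
by rewrite prodr_const card_ord -exprM sub0r mulrN1.
Qed.

Lemma sum_off_prob_flip_cost k (A : R) (x : bits n) :
  \sum_(ys : {ffun 'I_k -> bits n})
     off_prob c x ys * \sum_i (A ^+ flips x (ys i) - 1) =
  k%:R * ((1 + q * (A - 1)) ^+ zeros x - 1).
Proof.
under eq_bigr do rewrite mulr_sumr.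
rewrite exchange_big /=.
under eq_bigr => i _.
  rewrite (sum_off_prob_marginal x (fun y => A ^+ flips x y - 1)).
  under eq_bigr do rewrite mulrBr mulr1.
  rewrite sumrB sum_mut_prob sum_mut_prob_exprn_flips.
  over.
by rewrite sumr_const card_ord mulr_natl.
Qed.

Lemma rate_ge0_le1 : 0 <= c <= n%:R -> 0 <= q <= 1.
Proof.
case/andP => c0 cn; rewrite divr_ge0 //=.
by case: n cn => [|m] cn; rewrite ?invr0 ?mulr0 // ler_pdivrMr ?mul1r.
Qed.

Lemma off_prob_ge0 k (x : bits n) (ys : {ffun 'I_k -> bits n}) :
  0 <= c <= n%:R -> 0 <= off_prob c x ys.
Proof.
move/rate_ge0_le1/andP => [q0 q1].
apply: prodr_ge0 => i _; apply: prodr_ge0 => j _.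
by case: ifP; rewrite ?subr_ge0.
Qed.

Lemma drift_ge_flip_cost (K : R) k (f : bits n -> R) (x : bits n) :
  0 <= c <= n%:R -> 1 <= K ->
  - (ln K * probB c k x +
     K^-1 * (k%:R * ((1 + q * (expR 2 - 1)) ^+ zeros x - 1))) <= drift c k f x.
Proof.
move=> cn K1.
rewrite -sum_off_prob_flip_cost mulr_sumr /probB mulr_sumr -big_split /=.
rewrite /drift -sumrN; apply: ler_sum => ys _.
rewrite mulrCA [K^-1 * _]mulrCA -mulrDr -mulrN.
by apply: ler_wpM2l; [exact: off_prob_ge0 | exact: gain_ge_flip_cost].
Qed.

Lemma zeros_mul_rate_le (x : bits n) : 0 <= c -> (zeros x)%:R * q <= c.
Proof.
move=> c0; have [n0 | n_gt0] := posnP n.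
  by rewrite (_ : n%:R = 0) ?invr0 ?mulr0 // n0.
have Zn : (zeros x <= n)%N by rewrite (leq_trans (max_card _)) ?card_ord.
by rewrite mulrA ler_pdivrMr ?ltr0n // mulrC ler_wpM2l // ler_nat.
Qed.

End Mutation.

End Drift.

Theorem mainTheorem17 (R : realType) (c : R) :
  0 < c ->
  exists alpha1 : R, 0 < alpha1 /\
    forall (s F : R), 0 < s -> 1 < F ->
    forall (n : nat) (x : bits n) (lam : R) (f : bits n -> R),
      c <= n%:R -> 1 <= lam -> monotone_fun f ->
      - probB c (round_nat lam) x * (alpha1 * (1 + ln lam))
        <= drift c (round_nat lam) f x.
Proof.
move=> c_gt0; have c0 := ltW c_gt0; set a : R := expR 2 - 1.
have a0 : 0 <= a by rewrite subr_ge0 -[expR 2]expr1 exprn_expR2_ge1.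
have L0 : 0 <= ln (1 + 2 * c) by apply: ln_ge0; lra.
have aE0 : 0 <= a * expR (c * a) by rewrite mulr_ge0 ?expR_ge0.
exists (ln (1 + 2 * c) + a * expR (c * a) + 1); split; first lra.
move=> s F _ _ n x lam f cn lam1 _; set k := round_nat lam.
have K1 : 1 <= 1 + k%:R * c by rewrite lerDl mulr_ge0.
have klam : k%:R <= lam + 1 / 2 by rewrite truncn_le; lra.
have cn' : 0 <= c <= n%:R by rewrite c0.
have q01 := rate_ge0_le1 cn'.
apply: le_trans _ (drift_ge_flip_cost k f x cn' K1).
have lnK_le := ln_round_le c0 lam1 klam.
have cost_le := moment_le_one_sub_exprn k q01 a0 (zeros_mul_rate_le x c0).
rewrite probBE; set P := 1 - _ in cost_le *.
have P0 : 0 <= P.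
  by case/andP: q01 => q0 q1; rewrite subr_ge0 exprn_ile1 //; lra.
have lam0 := ln_ge0 lam1.
have := ler_wpM2r P0 lnK_le.
have : P * (ln (1 + 2 * c) + a * expR (c * a) + ln lam) <=
       P * ((ln (1 + 2 * c) + a * expR (c * a) + 1) * (1 + ln lam)).
  by apply: ler_wpM2l => //; nra.
lra.
Qed.
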